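(* Let $k$ be a field of characteristic $p>0$, $k'/k$ a finite purely inseparable field extension with normal generating sequence $\alpha_1,\ldots,\alpha_l$ and sequence of exponents $e_1,\dots,e_l$. Let $\mathfrak B:=k'\otimes_k k'$, $\mathfrak m$ the kernel of the multiplication map $\mathfrak B\to k'$, $a\otimes b\mapsto ab$, and $a_i:=1\otimes\alpha_i-\alpha_i\otimes 1\in\mathfrak m$. Regard $k'\subseteq\mathfrak B$ via $x\mapsto x\otimes 1$. Then: (i) $\mathfrak m$ is generated by $a_1,\dots,a_l$ over $k'$; namely $\mathfrak m=\mathfrak m\cap k'[a_1,\dots,a_l]$, i.e. every element of $\mathfrak m$ is a polynomial in $a_1,\dots,a_l$ with coefficients in $k'$; (ii) for each $1\le i\le l$, the $p^{e_i}$-power map takes $\mathfrak m$ into $k'[a_1^{p^{e_i}},\dots,a_{i-1}^{p^{e_i}}]\cap\mathfrak m$.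
   Context: For a tower $k'/k''/k$ and $x\in k'$, $e_{k''}(x)$ is the least $s$ with $x^{p^s}\in k''$; $x$ is normal in $k'/k''$ if $e_{k''}(x)\geq e_{k''}(y)$ for all $y\in k'$. A normal generating sequence of $k'/k$ is $\alpha_1,\dots,\alpha_l\in k'$ such that, with $k_i=k[\alpha_1,\dots,\alpha_i]$, each $\alpha_i$ is normal in $k'/k_{i-1}$, $\alpha_i\notin k_{i-1}$, and $k_l=k'$; its sequence of exponents is $e_i:=e_{k_{i-1}}(\alpha_i)$. *)

From HB Require Import structures.
From mathcomp Require Import all_boot all_order all_algebra all_field.
From mathcomp Require Import mpoly.
Set Implicit Arguments. Unset Strict Implicit. Unset Printing Implicit Defensive.
Import GRing.Theory.
Local Open Scope ring_scope.

Section PurelyInsep.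
Variables (F : fieldType) (L : fieldExtType F) (p : nat).

Definition kpref (l : nat) (alpha : l.-tuple L) (i : nat) : {vspace L} :=
  <<1 & take i alpha>>%VS.

Definition is_exponent (K : {vspace L}) (x : L) (s : nat) : Prop :=
  x ^+ (p ^ s) \in K /\ (forall t, (t < s)%N -> x ^+ (p ^ t) \notin K).

Definition normal_in (K : {vspace L}) (x : L) : Prop :=
  exists s, is_exponent K x s /\
    (forall (y : L) (t : nat), is_exponent K y t -> (t <= s)%N).

Definition normal_generating_sequence (l : nat) (alpha : l.-tuple L) : Prop :=
  (forall i : 'I_l, normal_in (kpref alpha i) (tnth alpha i) /\
                    tnth alpha i \notin kpref alpha i)
  /\ kpref alpha l = fullv.

Definition exponent_sequence (l : nat) (alpha : l.-tuple L) (e : 'I_l -> nat) :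
  Prop := forall i : 'I_l, is_exponent (kpref alpha i) (tnth alpha i) (e i).

End PurelyInsep.

(* B together with i1 (x |-> x (x) 1) and i2 (x |-> 1 (x) x) is the tensor
   product L (x)_F L, characterized by its universal property as the
   coproduct of two copies of L in the category of commutative F-algebras. *)
Definition is_tensor_square (F : fieldType) (L : fieldExtType F)
    (B : comNzRingType) (i1 i2 : {rmorphism L -> B}) : Prop :=
  (forall c : F, i1 (c%:A) = i2 (c%:A)) /\
  (forall (R : comNzRingType) (f g : {rmorphism L -> R}),
     (forall c : F, f (c%:A) = g (c%:A)) ->
     exists h : {rmorphism B -> R},
       [/\ forall x, h (i1 x) = f x, forall x, h (i2 x) = g x &
           forall h' : {rmorphism B -> R},
             (forall x, h' (i1 x) = f x) -> (forall x, h' (i2 x) = g x) ->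
             h' =1 h]).

From HB Require Import structures.
From mathcomp Require Import all_boot all_order all_algebra all_field.
From mathcomp Require Import mpoly.
From mathcomp Require Import boolp.
Import GRing.Theory.
Local Open Scope ring_scope.

Set Implicit Arguments. Unset Strict Implicit. Unset Printing Implicit Defensive.

(* The universal property of the tensor square says that B is generated as a
   ring by i1(L) and i2(L).  As i2(alpha_j) = a_j + i1(alpha_j) and the alpha_j
   generate L over F, every element of B, not only of the kernel of mu, is a
   polynomial over i1(L) in the a_j.
   For (ii) let q = p^(e_i).  The q-th power map is a ring endomorphism of B,
   so it suffices that y^q lies in F[alpha_1^q, ..., alpha_(i-1)^q] for every
   y in L.  Normality gives y^q in k_(i-1), and e_j = e_i + d with d >= 0 for
   j < i.  Adjoining the generators one at a time, the point is: if z lies in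
   M(alpha_j), where alpha_j^q is in M and M^(p^d) is in k_(j-1), and if
   z^(p^d) is in k_(j-1), then z = C(alpha_j) with deg C < q, and
   C^(p^d)(X^(p^d)) - z^(p^d) is a polynomial over k_(j-1) of degree
   < p^(e_j) = [k_j : k_(j-1)] vanishing at alpha_j; hence it is zero, C is
   constant and z lies in M. *)

(* The proof of [p \in [pchar R]] is a phantom argument: it is what makes the
   ring morphism structure below canonical. *)
Definition frobenius_pow (R : comNzRingType) (p : nat) of p \in [pchar R] :=
  fun (k : nat) (x : R) => x ^+ (p ^ k).

Section FrobeniusPower.
Variables (R : comNzRingType) (p : nat) (pcharRp : p \in [pchar R]) (k : nat).

Lemma pchar_nat_exp : [pchar R].-nat (p ^ k)%N.
Proof. by rewrite pnatX pnatE ?(pcharf_prime pcharRp) ?pcharRp ?orbT. Qed.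

Lemma pchar_exp_gt0 : (0 < p ^ k)%N.
Proof. by rewrite expn_gt0 prime_gt0 ?(pcharf_prime pcharRp). Qed.

Fact frobenius_pow_is_nmod_morphism : nmod_morphism (frobenius_pow pcharRp k).
Proof.
split=> [|x y]; first by rewrite /frobenius_pow expr0n gtn_eqF ?pchar_exp_gt0.
exact: exprDn_pchar pchar_nat_exp.
Qed.

Fact frobenius_pow_is_monoid_morphism :
  monoid_morphism (frobenius_pow pcharRp k).
Proof. by split=> [|x y]; rewrite /frobenius_pow ?expr1n ?exprMn. Qed.

HB.instance Definition _ := GRing.isNmodMorphism.Build R R
  (frobenius_pow pcharRp k) frobenius_pow_is_nmod_morphism.
HB.instance Definition _ := GRing.isMonoidMorphism.Build R R
  (frobenius_pow pcharRp k) frobenius_pow_is_monoid_morphism.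

End FrobeniusPower.

Lemma subring_closed_preim (R S : pzRingType) (f : {rmorphism R -> S})
    (A : subringClosed S) :
  subring_closed [preim f of A].
Proof.
split=> [|x y|x y]; rewrite !inE ?rmorph1 ?rpred1 // => Ax Ay.
  by rewrite rmorphB rpredB.
by rewrite rmorphM rpredM.
Qed.

Section AdjoinMorphism.
Variables (F : fieldType) (L : fieldExtType F).

Lemma rmorph_adjoin_seq_mem (R : comNzRingType) (S : semiringClosed R)
    (f : {rmorphism L -> R}) (K : {subfield L}) (s : seq L) :
  {subset K <= [preim f of S]} -> {subset s <= [preim f of S]} ->
  {subset <<K & s>>%VS <= [preim f of S]}.
Proof.
elim: s K => [|x s IHs] K SK Ss y; first by rewrite Fadjoin_nil => /SK.
rewrite adjoin_cons; apply: IHs => [z | z zs]; last first.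
  by rewrite Ss ?inE ?zs ?orbT.
case/Fadjoin_polyP=> P /polyOverP PK ->; rewrite inE -horner_map.
apply: rpred_horner; last exact: Ss (mem_head x s).
by apply/polyOverP => i; rewrite coef_map; apply: SK.
Qed.

End AdjoinMorphism.

Section Exponents.
Variables (F : fieldType) (L : fieldExtType F) (p : nat).
Hypothesis pcharLp : p \in [pchar L].

Lemma is_exponent_uniq (K : {vspace L}) x s t :
  is_exponent p K x s -> is_exponent p K x t -> s = t.
Proof.
move=> [Ks minKs] [Kt minKt]; case: (ltngtP s t) => // [/minKt | /minKs].
  by rewrite Ks.
by rewrite Kt.
Qed.

Lemma adjoin_degree_leq_exp (K : {subfield L}) x n :
  (0 < n)%N -> x ^+ n \in K -> (adjoin_degree K x <= n)%N.
Proof.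
move=> n_gt0 Kxn; have nz : 'X^n - (x ^+ n)%:P != 0 :> {poly L}.
  by rewrite -size_poly_eq0 size_XnsubC.
have KXn : 'X^n - (x ^+ n)%:P \is a polyOver K.
  by rewrite rpredB ?polyOverXn ?polyOverC.
have root_xn : root ('X^n - (x ^+ n)%:P) x by rewrite rootE !hornerE subrr.
have := dvdp_leq nz (minPoly_dvdp KXn root_xn).
by rewrite size_minPoly size_XnsubC.
Qed.

Lemma adjoin_degree_pchar (K : {subfield L}) x :
  x ^+ p \in K -> x \notin K -> adjoin_degree K x = p.
Proof.
move=> Kxp K'x; have p_gt0 := prime_gt0 (pcharf_prime pcharLp).
apply/eqP; rewrite eqn_leq adjoin_degree_leq_exp //=.
have : ~~ separable_element K x.
  by rewrite (pcharf_p_separable _ _ 0 pcharLp) expn1 (Fadjoin_idP Kxp).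
case/separablePn_pchar=> q pcharLq [g _ Dmin].
have /eqP <- : q == p by move: pcharLq; rewrite (pcharf_eq pcharLp).
have : (size (minPoly K x)).-1 = ((size g).-1 * q)%N.
  by rewrite Dmin size_comp_poly size_polyXn.
rewrite size_minPoly /= => deg; have : (0 < adjoin_degree K x)%N by [].
by rewrite deg muln_gt0 => /andP[g_gt0 _]; rewrite leq_pmull.
Qed.

Lemma adjoin_degree_exponent (K : {subfield L}) x e :
  is_exponent p K x e -> adjoin_degree K x = (p ^ e)%N.
Proof.
elim: e x => [|e IHe] x [Kx minKx].
  by apply/eqP; rewrite adjoin_deg_eq1; rewrite expn0 expr1 in Kx.
set y := x ^+ p.
have Ky : is_exponent p K y e.
  by split=> [|t lt_te]; rewrite -exprM -expnS ?minKx.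
have K'x : x \notin <<K; y>>%VS.
  apply: contra (minKx 0 isT) => Kyx; rewrite expn0 expr1.
  rewrite -separable_inseparable_element (pcharf_p_separable _ _ 0 pcharLp).
  rewrite expn1 Kyx; apply/purely_inseparable_elementP_pchar.
  by exists (p ^ e.+1)%N; rewrite ?pchar_nat_exp.
have Kyx : <<<<K; y>>; x>>%VS = <<K; x>>%VS.
  rewrite adjoinC; apply/(@Fadjoin_idP _ _ <<K; x>>%AS).
  by rewrite rpredX ?memv_adjoin.
have := dim_Fadjoin <<K; y>>%AS x.
rewrite /= Kyx (@adjoin_degree_pchar <<K; y>>%AS) ?memv_adjoin //.
rewrite !dim_Fadjoin (IHe y) // mulnA -expnS.
by move/eqP; rewrite eqn_pmul2r ?adim_gt0 // => /eqP.
Qed.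

Lemma exponent_poly_eq0 (K : {subfield L}) x e (Q : {poly L}) :
  is_exponent p K x e -> Q \is a polyOver K -> root Q x ->
  (size Q <= p ^ e)%N -> Q = 0.
Proof.
move=> expKx KQ rootQ; apply: contraTeq => nzQ; rewrite -ltnNge.
have := dvdp_leq nzQ (minPoly_dvdp KQ rootQ).
by rewrite size_minPoly (adjoin_degree_exponent expKx).
Qed.

Definition exponent_le (K : {vspace L}) s := forall y : L, y ^+ (p ^ s) \in K.

Definition normal_exponent (K : {vspace L}) x s :=
  is_exponent p K x s /\ exponent_le K s.

Lemma Fadjoin_exponent_pow_mem (E M : {subfield L}) x e d z :
    is_exponent p E x (e + d) -> x ^+ (p ^ e) \in M ->
    {subset M <= [preim frobenius_pow pcharLp d of E]} ->
  z \in <<M; x>>%VS -> z ^+ (p ^ d) \in E -> z \in M.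
Proof.
move=> expEx Mxq ME Mxz Ezr.
pose q := (p ^ e)%N; pose r := (p ^ d)%N; pose C := Fadjoin_poly M x z.
have q_gt0 : (0 < q)%N := pchar_exp_gt0 pcharLp e.
have r_gt0 : (0 < r)%N := pchar_exp_gt0 pcharLp d.
have sizeC : (size C <= q)%N.
  apply: leq_trans (size_Fadjoin_poly _ _ _) _.
  exact: adjoin_degree_leq_exp q_gt0 Mxq.
pose Cr := map_poly (frobenius_pow pcharLp d) C.
have sizeCrX : (size (Cr \Po 'X^r)).-1 = ((size C).-1 * r)%N.
  by rewrite size_comp_poly size_polyXn size_map_poly.
have : Cr \Po 'X^r - (z ^+ r)%:P = 0.
  apply: (exponent_poly_eq0 expEx).
  - rewrite rpredB ?polyOverC // polyOver_comp ?polyOverXn //.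
    apply/polyOverP => i; rewrite coef_map; apply: ME.
    exact: (polyOverP (Fadjoin_polyOver _ _ _)).
  - rewrite rootE !hornerE horner_comp hornerXn.
    rewrite [x ^+ r]/(frobenius_pow pcharLp d x) horner_map.
    by rewrite Fadjoin_poly_eq ?subrr.
  apply: leq_trans (size_polyD _ _) _; rewrite size_polyN size_polyC expnD.
  rewrite geq_max (leq_trans (leq_b1 _)) ?muln_gt0 ?q_gt0 // andbT.
  apply: leq_trans (leqSpred _) _; rewrite sizeCrX ltn_mul2r r_gt0.
  by move: sizeC q_gt0; case: (size C).
move/eqP; rewrite subr_eq0 => /eqP CrX.
have : ((size C).-1 * r)%N = 0%N.
  by rewrite -sizeCrX CrX size_polyC; case: (_ != 0).
move/eqP; rewrite muln_eq0 (gtn_eqF r_gt0) orbF -subn1 subn_eq0.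
move=> /size1_polyC C0.
rewrite -(Fadjoin_poly_eq Mxz) -/C C0 hornerC.
exact: (polyOverP (Fadjoin_polyOver _ _ _)).
Qed.

Lemma adjoin_seq_exponent_pow_mem (E : {subfield L}) (s : seq L) e :
    (forall k, (k < size s)%N -> exists2 ek, (e <= ek)%N &
       normal_exponent <<E & take k s>> (nth 0 s k) ek) ->
  forall x, x ^+ (p ^ e) \in <<E & s>>%VS ->
  x ^+ (p ^ e) \in <<E & [seq (y ^+ (p ^ e))%R | y <- s]>>%VS.
Proof.
elim: s E => [|x0 s IHs] E normal_s x //.
have [e0 le_e_e0 [expEx0 boundE]] := normal_s 0%N isT.
rewrite take0 Fadjoin_nil /= in expEx0 boundE.
have [d De0] : exists d, e0 = (e + d)%N by exists (e0 - e)%N; rewrite subnKC.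
subst e0; pose M := <<E & [seq (y ^+ (p ^ e))%R | y <- x0 :: s]>>%AS.
rewrite adjoin_cons => /(IHs <<E; x0>>%AS) Ex0sx.
have {Ex0sx} Mx0x : x ^+ (p ^ e) \in <<M; x0>>%VS.
  apply: subvP _ _ (Ex0sx _) => [|k lt_ks]; last first.
    have [ek le_e_ek] := normal_s k.+1 lt_ks.
    by exists ek; rewrite -?adjoin_cons.
  rewrite -adjoin_cons -adjoin_rcons; apply: adjoin_seqSr => z.
  by rewrite mem_rcons !inE => /predU1P[-> | ->]; rewrite ?eqxx ?orbT.
apply: (Fadjoin_exponent_pow_mem expEx0) Mx0x _.
- exact: seqv_sub_adjoin (mem_head _ _).
- apply: rmorph_adjoin_seq_mem => [y Ey | _ /mapP[y _ ->]]; rewrite inE.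
    exact: rpredX.
  by rewrite /= /frobenius_pow -exprM -expnD boundE.
- by rewrite -exprM -expnD boundE.
Qed.

End Exponents.

Section NormalGeneratingSequence.
Variables (F : fieldType) (L : fieldExtType F) (p : nat).
Hypotheses (pcharLp : p \in [pchar L])
  (insep : purely_inseparable (1%VS : {vspace L}) fullv).

Lemma normal_in_exponent (K : {subfield L}) x s :
  normal_in p K x -> is_exponent p K x s -> normal_exponent p K x s.
Proof.
move=> [s' [expKx max_s']] expKxs; rewrite (is_exponent_uniq expKxs expKx).
split=> // y; have : purely_inseparable_element K y.
  exact: sub_inseparable (sub1v K) (purely_inseparableP insep y (memvf y)).
case/purely_inseparable_elementP_pchar=> n pcharLn Kyn.
have /p_natP[m Dn] : p.-nat n by rewrite -(eq_pnat _ (pcharf_eq pcharLp)).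
have ex_t : exists t, y ^+ (p ^ t) \in K by exists m; rewrite -Dn.
case: (ex_minnP ex_t) => t Kyt min_t.
have expKyt : is_exponent p K y t.
  by split=> // u lt_ut; apply/negP => /min_t; rewrite leqNgt lt_ut.
by rewrite -(subnKC (max_s' _ _ expKyt)) expnD exprM rpredX.
Qed.

Variables (l : nat) (alpha : l.-tuple L) (e : 'I_l -> nat).
Hypotheses (normal_alpha : normal_generating_sequence p alpha)
  (exps : exponent_sequence p alpha e).

Lemma kpref_normal_exponent (j : 'I_l) :
  normal_exponent p (kpref alpha j) (tnth alpha j) (e j).
Proof.
exact: (@normal_in_exponent <<1 & take j alpha>>%AS _ _
  (normal_alpha.1 j).1 (exps j)).
Qed.

Lemma kprefS (i j : nat) : (i <= j)%N -> (kpref alpha i <= kpref alpha j)%VS.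
Proof.
move=> le_ij; apply: adjoin_seqSr.
by rewrite -(take_takel _ le_ij); apply: mem_take.
Qed.

Lemma exponent_sequence_nonincr (i j : 'I_l) : (i <= j)%N -> (e j <= e i)%N.
Proof.
move=> le_ij; rewrite leqNgt; apply/negP => /(kpref_normal_exponent j).1.2.
by rewrite (subvP (kprefS le_ij)) ?(kpref_normal_exponent i).2.
Qed.

Lemma exponent_pow_mem_adjoin_pow (i : 'I_l) y :
  y ^+ (p ^ e i) \in <<1 & [seq (z ^+ (p ^ e i))%R | z <- take i alpha]>>%VS.
Proof.
apply: (@adjoin_seq_exponent_pow_mem _ _ _ pcharLp 1%AS (take i alpha));
  last exact: (kpref_normal_exponent i).2 y.
have size_take_i : size (take i alpha) = i.
  by rewrite size_takel // size_tuple ltnW.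
move=> k; rewrite size_take_i => lt_ki; have le_ki := ltnW lt_ki.
have lt_kl : (k < l)%N := ltn_trans lt_ki (ltn_ord i).
exists (e (Ordinal lt_kl)).
  exact: (@exponent_sequence_nonincr (Ordinal lt_kl) i).
rewrite take_takel // nth_take //.
by have := kpref_normal_exponent (Ordinal lt_kl); rewrite (tnth_nth 0).
Qed.

End NormalGeneratingSequence.

Lemma mem_take_tnth (T : eqType) n (t : n.-tuple T) (i : 'I_n) z :
  z \in take i t ->
  exists j : 'I_i, z = tnth t (widen_ord (ltnW (ltn_ord i)) j).
Proof.
have size_take_i : size (take i t) = i by rewrite size_takel // size_tuple ltnW.
case/(nthP z) => k; rewrite size_take_i => lt_ki <-.
by exists (Ordinal lt_ki); rewrite nth_take // (tnth_nth z).
Qed.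

Section MpolyValues.
Variables (F : fieldType) (L : fieldExtType F) (R : comNzRingType).
Variables (f : {rmorphism L -> R}) (n : nat) (v : 'I_n -> R).

Definition mpoly_values : pred R :=
  fun b => `[< exists P : {mpoly L[n]}, b = (map_mpoly f P).@[v] >].

Lemma mpoly_values_subring_closed : subring_closed mpoly_values.
Proof.
split=> [|_ _ /asboolP[P ->] /asboolP[Q ->]|_ _ /asboolP[P ->] /asboolP[Q ->]];
  apply/asboolP.
- by exists 1; rewrite rmorph1 meval1.
- by exists (P - Q); rewrite rmorphB mevalB.
- by exists (P * Q); rewrite rmorphM mevalM.
Qed.

HB.instance Definition _ :=
  GRing.isSubringClosed.Build R mpoly_values mpoly_values_subring_closed.

Lemma mpoly_values_rmorph x : f x \in mpoly_values.
Proof. by apply/asboolP; exists x%:MP; rewrite map_mpolyC mevalC. Qed.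

Lemma mpoly_values_var j : v j \in mpoly_values.
Proof. by apply/asboolP; exists 'X_j; rewrite map_mpolyX mevalXU. Qed.

End MpolyValues.

Section TensorSquare.
Variables (F : fieldType) (L : fieldExtType F) (B : comNzRingType).
Variables (i1 i2 : {rmorphism L -> B}).

Section SubringInduction.
Variables (S : pred B) (S_closed : subring_closed S).

Record subring_elt :=
  SubringElt { subring_val : B; subring_valP : subring_val \in S }.
HB.instance Definition _ := [isSub for subring_val].
HB.instance Definition _ := [Choice of subring_elt by <:].
HB.instance Definition _ :=
  GRing.SubChoice_isSubComNzRing.Build B S subring_elt S_closed.

Definition subring_corestr (f : {rmorphism L -> B}) (fS : forall x, f x \in S)
  (x : L) : subring_elt := SubringElt (fS x).

Section Corestriction.
Variables (f : {rmorphism L -> B}) (fS : forall x, f x \in S).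

Fact subring_corestr_is_nmod_morphism : nmod_morphism (subring_corestr fS).
Proof. by split=> [|x y]; apply: val_inj; rewrite /= ?rmorph0 ?rmorphD. Qed.

Fact subring_corestr_is_monoid_morphism : monoid_morphism (subring_corestr fS).
Proof. by split=> [|x y]; apply: val_inj; rewrite /= ?rmorph1 ?rmorphM. Qed.

HB.instance Definition _ := GRing.isNmodMorphism.Build L subring_elt
  (subring_corestr fS) subring_corestr_is_nmod_morphism.
HB.instance Definition _ := GRing.isMonoidMorphism.Build L subring_elt
  (subring_corestr fS) subring_corestr_is_monoid_morphism.

End Corestriction.

Lemma tensor_square_ind : is_tensor_square i1 i2 ->
  (forall x, i1 x \in S) -> (forall x, i2 x \in S) -> forall b, b \in S.
Proof.
move=> [i12F univ] S1 S2 b.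
have corestrF c : subring_corestr S1 c%:A = subring_corestr S2 c%:A.
  by apply: val_inj; exact: i12F.
have [h [h1 h2 _]] := univ _ _ _ corestrF.
have [h0 [_ _ uniq]] := univ _ i1 i2 i12F.
have b_h0 : b = h0 b := uniq idfun (fun=> erefl) (fun=> erefl) b.
have val_h : val (h b) = h0 b.
  by apply: (uniq (val \o h)) => x /=; rewrite ?h1 ?h2.
by rewrite b_h0 -val_h subring_valP.
Qed.

End SubringInduction.

Lemma i2_adjoin_mem (S : semiringClosed B) (s : seq L) :
  (forall c : F, i1 c%:A = i2 c%:A) -> (forall x, i1 x \in S) ->
  {subset s <= [preim i2 of S]} -> {subset <<1 & s>>%VS <= [preim i2 of S]}.
Proof.
move=> i12F S1; apply: rmorph_adjoin_seq_mem => _ /vlineP[c ->].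
by rewrite inE -[c *: 1]/(c%:A) -i12F S1.
Qed.

Lemma i2_exp_pchar (q : nat) x : [pchar B].-nat q ->
  i2 x ^+ q = (i2 x - i1 x) ^+ q + i1 (x ^+ q).
Proof. by move=> pcharBq; rewrite rmorphXn -exprDn_pchar // subrK. Qed.

End TensorSquare.

Theorem lemma2p7 (F : fieldType) (L : fieldExtType F) (p : nat)
  (pchar_p : p \in [pchar F])
  (insep : purely_inseparable (1%VS : {vspace L}) fullv)
  (l : nat) (alpha : l.-tuple L) (e : 'I_l -> nat)
  (normal_seq : normal_generating_sequence p alpha)
  (exps : exponent_sequence p alpha e)
  (B : comNzRingType) (i1 i2 : {rmorphism L -> B})
  (tensor : is_tensor_square i1 i2)
  (mu : {rmorphism B -> L})
  (mu1 : forall x, mu (i1 x) = x) (mu2 : forall x, mu (i2 x) = x) :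
  let a := fun j : 'I_l => i2 (tnth alpha j) - i1 (tnth alpha j) in
  (forall u : B, mu u = 0 ->
     exists P : {mpoly L[l]}, u = (map_mpoly i1 P).@[a])
  /\
  (forall (i : 'I_l) (u : B), mu u = 0 ->
     exists P : {mpoly L[i]},
       u ^+ (p ^ e i) =
         (map_mpoly i1 P).@[fun j : 'I_i =>
                              a (widen_ord (ltnW (ltn_ord i)) j) ^+ (p ^ e i)]
       /\ mu (u ^+ (p ^ e i)) = 0).
Proof.
move=> a; have pcharLp : p \in [pchar L] by rewrite pchar_lalg.
have pcharBp : p \in [pchar B] := rmorph_pchar i1 pcharLp.
have i12F := tensor.1.
have gen_alpha : <<1 & alpha>>%VS = fullv.
  by move: normal_seq.2; rewrite /kpref take_oversize // size_tuple.
split=> [u _ | i u mu_u].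
  apply/asboolP.
  apply: (tensor_square_ind (mpoly_values_subring_closed i1 a) tensor).
    exact: mpoly_values_rmorph.
  move=> y; have : y \in <<1 & alpha>>%VS by rewrite gen_alpha memvf.
  apply: i2_adjoin_mem i12F (mpoly_values_rmorph i1 a) _ y => _ /tnthP[j ->].
  by rewrite inE -[i2 _](subrK (i1 (tnth alpha j))) rpredD ?mpoly_values_rmorph
    ?mpoly_values_var.
pose v j := a (widen_ord (ltnW (ltn_ord i)) j) ^+ (p ^ e i).
have : u \in [preim frobenius_pow pcharBp (e i) of mpoly_values i1 v].
  apply: (tensor_square_ind (subring_closed_preim _ _) tensor) => y;
    rewrite inE /= /frobenius_pow -rmorphXn; first exact: mpoly_values_rmorph.
  have := exponent_pow_mem_adjoin_pow pcharLp insep normal_seq exps i y.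
  apply: i2_adjoin_mem i12F (mpoly_values_rmorph i1 v) _ _.
  move=> _ /mapP[_ /mem_take_tnth[j ->] ->].
  rewrite inE rmorphXn (i2_exp_pchar i1) ?(pchar_nat_exp pcharBp) //.
  by rewrite rpredD ?mpoly_values_rmorph // (mpoly_values_var i1 v j).
rewrite inE => /asboolP[P uP]; exists P; split=> //.
by rewrite rmorphXn mu_u expr0n gtn_eqF ?(pchar_exp_gt0 pcharLp).
Qed.
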